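(* Let $A$ and $A'$ be three-dimensional cubic regular $\mathbb Z$-algebras over $k$. If their truncations $\bigoplus_{0\le i,j\le3}A_{ij}$ and $\bigoplus_{0\le i,j\le 3}A'_{ij}$ are isomorphic (as algebras, compatibly with the decompositions), then $A\cong A'$.
   Context: A $\mathbb Z$-algebra over a field $k$ is $A=\bigoplus_{i,j\in\mathbb Z}A_{ij}$ with associative multiplication, $A_{ij}A_{jk}\subseteq A_{ik}$, $A_{ij}A_{kl}=0$ for $j\ne k$, local units $e_i\in A_{ii}$. Right modules form $\mathrm{Gr}(A)$, $P_i=e_iA$. $A$ is connected if $A_{ij}=0$ for $j<i$, $\dim_kA_{ij}<\infty$, $A_{ii}=k$; $S_i$ is the simple quotient of $P_i$. A connected $A$ is AS-regular if $\dim A_{ij}$ is polynomially bounded in $j-i$, the projective dimensions of the $S_i$ are finite and uniformly bounded, and for each $i$, $\sum_{j,l}\dim\operatorname{Ext}^j_{\mathrm{Gr}(A)}(S_l,P_i)=1$; it is three-dimensional cubic regular if in addition each $S_i$ has minimal resolution $0\to P_{i+4}\to P_{i+3}^2\to P_{i+1}^2\to P_i\to S_i\to0$. *)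

From HB Require Import structures.
From mathcomp Require Import all_boot all_order all_algebra.
Set Implicit Arguments. Unset Strict Implicit. Unset Printing Implicit Defensive.
Import GRing.Theory.
Local Open Scope ring_scope.

(* A Z-algebra over k whose components A_ij are finite-dimensional k-spaces
   (finite-dimensionality is part of connectedness, the only case used).
   A = (+)_{i,j} A_ij; the rule A_ij A_kl = 0 for j <> k is built into the
   typing of the multiplication. *)
Record zalg (k : fieldType) := ZAlg {
  zcomp :> int -> int -> vectType k;
  zmul : forall i j l, zcomp i j -> zcomp j l -> zcomp i l;
  zunit : forall i, zcomp i i;
  zmulDl : forall i j l (a : k) (x y : zcomp i j) (z : zcomp j l),
      zmul (a *: x + y) z = a *: zmul x z + zmul y z;
  zmulDr : forall i j l (a : k) (x : zcomp i j) (y z : zcomp j l),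
      zmul x (a *: y + z) = a *: zmul x y + zmul x z;
  zmulA : forall i j l m (x : zcomp i j) (y : zcomp j l) (z : zcomp l m),
      zmul (zmul x y) z = zmul x (zmul y z);
  zmul1l : forall i j (x : zcomp i j), zmul (zunit i) x = x;
  zmul1r : forall i j (x : zcomp i j), zmul x (zunit j) = x
}.
Arguments zmul {k} z0 {i j l} _ _.
Arguments zunit {k} z0 i.

Definition zdim (k : fieldType) (A : zalg k) (i j : int) : nat := \dim {: A i j}.

Definition zconnected (k : fieldType) (A : zalg k) : Prop :=
  (forall i j : int, j < i -> zdim A i j = 0%N) /\ (forall i, zdim A i i = 1%N).

Definition zpolybounded (k : fieldType) (A : zalg k) : Prop :=
  exists c d : nat, forall i j : int, (zdim A i j <= c * (absz (j - i)).+1 ^ d)%N.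

(* Data of a complex  P_{i+4} -> P_{i+3}^2 -> P_{i+1}^2 -> P_i  of free
   graded right modules P_m = e_m A; a morphism P_m -> P_n is left
   multiplication by an element of A_{nm}. *)
Record res_data (k : fieldType) (A : zalg k) (i : int) := ResData {
  rx1 : A i (i + 1); rx2 : A i (i + 1);
  ry11 : A (i + 1) (i + 3); ry12 : A (i + 1) (i + 3);
  ry21 : A (i + 1) (i + 3); ry22 : A (i + 1) (i + 3);
  rz1 : A (i + 3) (i + 4); rz2 : A (i + 3) (i + 4)
}.

(* 0 -> P_{i+4} -> P_{i+3}^2 -> P_{i+1}^2 -> P_i -> S_i -> 0 is exact, checked
   in every degree j (the degree-j part of P_m is A_{mj}, and (S_i)_j is k for
   j = i and 0 otherwise). Such a resolution is automatically minimal. *)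
Definition is_cubic_resolution (k : fieldType) (A : zalg k) (i : int)
    (r : res_data A i) : Prop :=
  [/\ (forall j (w : A (i + 4) j),
         zmul A (rz1 r) w = 0 -> zmul A (rz2 r) w = 0 -> w = 0),
      (forall j (u1 u2 : A (i + 3) j),
         (zmul A (ry11 r) u1 + zmul A (ry12 r) u2 = 0 /\
          zmul A (ry21 r) u1 + zmul A (ry22 r) u2 = 0) <->
         exists w : A (i + 4) j, u1 = zmul A (rz1 r) w /\ u2 = zmul A (rz2 r) w),
      (forall j (v1 v2 : A (i + 1) j),
         zmul A (rx1 r) v1 + zmul A (rx2 r) v2 = 0 <->
         exists u1 u2 : A (i + 3) j,
           v1 = zmul A (ry11 r) u1 + zmul A (ry12 r) u2 /\
           v2 = zmul A (ry21 r) u1 + zmul A (ry22 r) u2)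
    & (forall j (t : A i j), j != i ->
         exists v1 v2 : A (i + 1) j, t = zmul A (rx1 r) v1 + zmul A (rx2 r) v2)].

(* Hom_{Gr A}(-, P_i) applied to the resolution r of S_l: using
   Hom(P_m, P_i) = A_{im}, the complex
   A_{il} -> A_{i,l+1}^2 -> A_{i,l+3}^2 -> A_{i,l+4}. *)
Definition ext_d0 (k : fieldType) (A : zalg k) (i l : int) (r : res_data A l) :=
  linfun (fun x : A i l => (zmul A x (rx1 r), zmul A x (rx2 r))).
Definition ext_d1 (k : fieldType) (A : zalg k) (i l : int) (r : res_data A l) :=
  linfun (fun v : prod (A i (l + 1)) (A i (l + 1)) =>
    (zmul A v.1 (ry11 r) + zmul A v.2 (ry21 r),
     zmul A v.1 (ry12 r) + zmul A v.2 (ry22 r))).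
Definition ext_d2 (k : fieldType) (A : zalg k) (i l : int) (r : res_data A l) :=
  linfun (fun u : prod (A i (l + 3)) (A i (l + 3)) =>
    zmul A u.1 (rz1 r) + zmul A u.2 (rz2 r)).

(* sum_j dim Ext^j_{Gr A}(S_l, P_i), computed from the resolution r of S_l *)
Definition ext_total (k : fieldType) (A : zalg k) (i l : int) (r : res_data A l) : nat :=
  (\dim (lker (ext_d0 i r))
   + (\dim (lker (ext_d1 i r)) - \dim (limg (ext_d0 i r)))
   + (\dim (lker (ext_d2 i r)) - \dim (limg (ext_d1 i r)))
   + (zdim A i (l + 4) - \dim (limg (ext_d2 i r))))%N.

(* Three-dimensional cubic regular: connected, polynomial growth, each S_i has
   a (minimal) resolution of the cubic shape (so pd S_i <= 3, uniformly), and
   the Gorenstein condition sum_{j,l} dim Ext^j(S_l, P_i) = 1 for every i. *)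
Definition cubic_regular (k : fieldType) (A : zalg k) : Prop :=
  [/\ zconnected A, zpolybounded A &
      exists res : forall l : int, res_data A l,
        (forall l, is_cubic_resolution (res l)) /\
        (forall i : int, exists l0 : int,
            ext_total i (res l0) = 1%N /\
            forall l, l != l0 -> ext_total i (res l) = 0%N)].

Definition graded_iso_on (k : fieldType) (A B : zalg k) (inR : int -> bool) : Prop :=
  exists phi : forall i j : int, A i j -> B i j,
    [/\ (forall i j, inR i -> inR j ->
           forall (a : k) (x y : A i j), phi i j (a *: x + y) = a *: phi i j x + phi i j y),
        (forall i j, inR i -> inR j -> bijective (phi i j)),
        (forall i j l, inR i -> inR j -> inR l ->
           forall (x : A i j) (y : A j l), phi i l (zmul A x y) = zmul B (phi i j x) (phi j l y))
      & (forall i, inR i -> phi i i (zunit A i) = zunit B i)].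

Definition zalg_iso (k : fieldType) (A B : zalg k) : Prop :=
  graded_iso_on A B (fun _ => true).

Definition trunc03_iso (k : fieldType) (A B : zalg k) : Prop :=
  graded_iso_on A B (fun i : int => (0 <= i) && (i <= 3)).

From HB Require Import structures.
From mathcomp Require Import all_boot all_order all_algebra zify.
From Stdlib Require Import ClassicalEpsilon FunctionalExtensionality.
Set Implicit Arguments. Unset Strict Implicit. Unset Printing Implicit Defensive.
Import GRing.Theory.
Local Open Scope ring_scope.

(* Let phi be a graded isomorphism between A and A' on the indices of a window
   [a, b] with b - a >= 3, and put l = a - 1.  Write the minimal resolution of
   S_l as  P_{l+4} --z--> P_{l+3}^2 --Y--> P_{l+1}^2 --x--> P_l.  Since A_{jl} = 0
   for j > l and A_ll = k, only the row A_{l,*} is new, and: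
   - the Gorenstein condition forces Ext^*(S_l, P_{l+1}) = Ext^*(S_l, P_{l+3}) = 0,
     so z is a basis of A_{l+3,l+4} and the rows of Y are a basis of the
     relations u z = 0 in A_{l+1,l+3}^2 (tail_bases, res_tail_bases);
   - such pairs (Y, z) are unique up to GL_2 x GL_2 (tail_bases_unique), so phi(Y)
     is the Y' of A' up to a change of basis of x';
   - exactness of the resolution presents A_{l,j} as x A_{l+1,j}^2 modulo
     Y A_{l+3,j}^2 (presents, res_presents), so  x v |-> x' phi(v)  extends phi
     to [l, b] (extend_row).
   The same argument in the opposite algebras extends phi to [a, b + 1].
   Starting from [0, 3], the windows [-n, 3 + n] carry compatible isomorphisms,
   which glue to an isomorphism A ~= A' (glue_iso, iso_of_window_iso). *)

Section ZmulLinear.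
Variables (k : fieldType) (A : zalg k).

Lemma zmul0l i j l (z : A j l) : zmul A (0 : A i j) z = 0.
Proof.
have := zmulDl 1 (0 : A i j) 0 z; rewrite !scale1r addr0 => H.
by apply: (@addrI _ (zmul A (0 : A i j) z)); rewrite addr0 -H.
Qed.

Lemma zmul0r i j l (x : A i j) : zmul A x (0 : A j l) = 0.
Proof.
have := zmulDr 1 x 0 (0 : A j l); rewrite !scale1r addr0 => H.
by apply: (@addrI _ (zmul A x (0 : A j l))); rewrite addr0 -H.
Qed.

Lemma zmulDl2 i j l (x y : A i j) (z : A j l) :
  zmul A (x + y) z = zmul A x z + zmul A y z.
Proof. by have := zmulDl 1 x y z; rewrite !scale1r. Qed.

Lemma zmulDr2 i j l (x : A i j) (y z : A j l) :
  zmul A x (y + z) = zmul A x y + zmul A x z.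
Proof. by have := zmulDr 1 x y z; rewrite !scale1r. Qed.

Lemma zmulZl i j l a (x : A i j) (z : A j l) : zmul A (a *: x) z = a *: zmul A x z.
Proof. by rewrite -(addr0 (a *: x)) zmulDl zmul0l addr0. Qed.

Lemma zmulZr i j l a (x : A i j) (z : A j l) : zmul A x (a *: z) = a *: zmul A x z.
Proof. by rewrite -(addr0 (a *: z)) zmulDr zmul0r addr0. Qed.

Lemma zmulBr i j l (x : A i j) (y z : A j l) :
  zmul A x (y - z) = zmul A x y - zmul A x z.
Proof. by rewrite zmulDr2 -scaleN1r zmulZr scaleN1r. Qed.

Lemma zmul_suml i j l (I : Type) (r : seq I) (P : pred I) (F : I -> A i j) (z : A j l) :
  zmul A (\sum_(a <- r | P a) F a) z = \sum_(a <- r | P a) zmul A (F a) z.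
Proof.
by apply: (big_morph (fun x => zmul A x z)); [move=> x y; exact: zmulDl2 | exact: zmul0l].
Qed.

Lemma zmul_sumr i j l (I : Type) (r : seq I) (P : pred I) (F : I -> A j l) (x : A i j) :
  zmul A x (\sum_(a <- r | P a) F a) = \sum_(a <- r | P a) zmul A x (F a).
Proof.
by apply: (big_morph (fun y => zmul A x y)); [move=> y z; exact: zmulDr2 | exact: zmul0r].
Qed.

Lemma zmul_unitl i j (c : k) (y : A i j) : zmul A (c *: zunit A i) y = c *: y.
Proof. by rewrite zmulZl zmul1l. Qed.

Lemma zmul_unitr i j (c : k) (y : A i j) : zmul A y (c *: zunit A j) = c *: y.
Proof. by rewrite zmulZr zmul1r. Qed.

End ZmulLinear.

(* The opposite Z-algebra: (A^op)_ij = A_ji.  It turns right extensions of an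
   isomorphism into left ones. *)
Definition zop (k : fieldType) (A : zalg k) : zalg k.
Proof.
refine (@ZAlg k (fun i j => A j i) (fun i j l x y => zmul A y x) (zunit A) _ _ _ _ _).
- by move=> i j l a x y z; rewrite zmulDr.
- by move=> i j l a x y z; rewrite zmulDl.
- by move=> i j l m x y z; rewrite zmulA.
- by move=> i j x; rewrite zmul1r.
- by move=> i j x; rewrite zmul1l.
Defined.

Lemma zopE (k : fieldType) (A : zalg k) i j l (x : zop A i j) (y : zop A j l) :
  zmul (zop A) x y = zmul A y x.
Proof. by []. Qed.

Lemma ord2P (a : 'I_2) : a = ord0 \/ a = ord_max.
Proof. by case: a => [[|[|n]] H]; [left|right|]; try exact: val_inj. Qed.

Lemma sum2 (V : nmodType) (F : 'I_2 -> V) : \sum_(a < 2) F a = F ord0 + F ord_max.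
Proof. by rewrite big_ord_recl big_ord1; congr (_ + _); congr F; exact: val_inj. Qed.

Definition mk2 (T : Type) (a b : T) : 'I_2 -> T := fun i => if i == ord0 then a else b.
Lemma mk2_0 T (a b : T) : mk2 a b ord0 = a. Proof. by rewrite /mk2 eqxx. Qed.
Lemma mk2_1 T (a b : T) : mk2 a b ord_max = b. Proof. by []. Qed.

Lemma fun2_eq T (f g : 'I_2 -> T) : f ord0 = g ord0 -> f ord_max = g ord_max -> f = g.
Proof. by move=> h0 h1; apply: functional_extensionality => a; case: (ord2P a) => ->. Qed.

Section PairMatrices.
Variables (k : fieldType) (V : lmodType k).
Implicit Types (C D K : 'M[k]_2) (v : 'I_2 -> V) (Y : 'I_2 -> 'I_2 -> V).

Definition mxv C v : 'I_2 -> V := fun a => \sum_b C a b *: v b.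
Definition mxl C Y : 'I_2 -> 'I_2 -> V := fun a b => \sum_c C a c *: Y c b.
Definition mxr Y K : 'I_2 -> 'I_2 -> V := fun a b => \sum_c K c b *: Y a c.
Definition rowcomb (c : 'I_2 -> k) Y : 'I_2 -> V := fun b => \sum_a c a *: Y a b.
Definition comb (c : 'I_2 -> k) v : V := \sum_a c a *: v a.

Lemma sum_delta (F : 'I_2 -> V) a : \sum_b (a == b)%:R *: F b = F a.
Proof.
rewrite (bigD1 a) //= eqxx scale1r big1 ?addr0 // => b /negPf.
by rewrite eq_sym => ->; rewrite scale0r.
Qed.

Lemma mxvM C D v : mxv C (mxv D v) = mxv (C *m D) v.
Proof.
apply: functional_extensionality => a; rewrite /mxv.
under eq_bigr do rewrite scaler_sumr.
rewrite exchange_big; apply: eq_bigr => c _; rewrite mxE scaler_suml.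
by apply: eq_bigr => b _; rewrite scalerA.
Qed.

Lemma mxv1 v : mxv 1%:M v = v.
Proof.
apply: functional_extensionality => a; rewrite /mxv.
under eq_bigr do rewrite mxE.
exact: sum_delta.
Qed.

Lemma mxlM C D Y : mxl C (mxl D Y) = mxl (C *m D) Y.
Proof.
do 2 apply: functional_extensionality => ?; rewrite /mxl.
under eq_bigr do rewrite scaler_sumr.
rewrite exchange_big; apply: eq_bigr => c _; rewrite mxE scaler_suml.
by apply: eq_bigr => d _; rewrite scalerA.
Qed.

Lemma mxrM Y K D : mxr (mxr Y K) D = mxr Y (K *m D).
Proof.
do 2 apply: functional_extensionality => ?; rewrite /mxr.
under eq_bigr do rewrite scaler_sumr.
rewrite exchange_big; apply: eq_bigr => c _; rewrite mxE scaler_suml.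
by apply: eq_bigr => d _; rewrite scalerA mulrC.
Qed.

Lemma mxl_mxr C Y K : mxl C (mxr Y K) = mxr (mxl C Y) K.
Proof.
do 2 apply: functional_extensionality => ?; rewrite /mxr /mxl.
under eq_bigr do rewrite scaler_sumr.
rewrite exchange_big; apply: eq_bigr => c _; rewrite scaler_sumr.
by apply: eq_bigr => d _; rewrite !scalerA mulrC.
Qed.

Lemma mxl1 Y : mxl 1%:M Y = Y.
Proof.
apply: functional_extensionality => a; apply: functional_extensionality => b; rewrite /mxl.
under eq_bigr do rewrite mxE.
exact: (sum_delta (fun c => Y c b)).
Qed.

Lemma mxr1 Y : mxr Y 1%:M = Y.
Proof.
apply: functional_extensionality => a; apply: functional_extensionality => b; rewrite /mxr.
under eq_bigr do rewrite mxE eq_sym.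
exact: (sum_delta (fun c => Y a c)).
Qed.

Lemma rowcomb_delta Y a : rowcomb (fun e => (a == e)%:R) Y = Y a.
Proof. by apply: functional_extensionality => b; exact: (sum_delta (fun e => Y e b)). Qed.

Lemma mxv_inj v : (forall c, comb c v = 0 -> forall a, c a = 0) ->
  forall C D, mxv C v = mxv D v -> C = D.
Proof.
move=> Hv C D E; apply/matrixP => a b.
have : comb (fun b => C a b - D a b) v = 0.
  rewrite /comb; under eq_bigr do rewrite scalerBl.
  by rewrite sumrB -/(mxv C v a) -/(mxv D v a) E subrr.
by move/Hv => /(_ b) /eqP; rewrite subr_eq0 => /eqP.
Qed.

Lemma mxl_inj Y : (forall c, rowcomb c Y = (fun _ => 0) -> forall a, c a = 0) ->
  forall C D, mxl C Y = mxl D Y -> C = D.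
Proof.
move=> HY C D E; apply/matrixP => a b.
have : rowcomb (fun b => C a b - D a b) Y = (fun _ => 0).
  apply: functional_extensionality => e.
  rewrite /rowcomb; under eq_bigr do rewrite scalerBl.
  by rewrite sumrB -/(mxl C Y a e) -/(mxl D Y a e) E subrr.
by move/HY => /(_ b) /eqP; rewrite subr_eq0 => /eqP.
Qed.

End PairMatrices.

Lemma fin_choice2 (k : fieldType) (P : 'I_2 -> ('I_2 -> k) -> Prop) :
  (forall a, exists c, P a c) -> exists C : 'M[k]_2, forall a, P a (fun b => C a b).
Proof.
move=> H; have [c0 H0] := H ord0; have [c1 H1] := H ord_max.
pose C : 'M[k]_2 := \matrix_(a < 2, b < 2) if a == ord0 then c0 b else c1 b.
exists C => a.
have -> : (fun b => C a b) = if a == ord0 then c0 else c1.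
  by apply: functional_extensionality => b; rewrite mxE; case: (a == ord0).
by case: (ord2P a) => ->.
Qed.

Section PairProducts.
Variables (k : fieldType) (A : zalg k).

Definition dot i j l (x : 'I_2 -> A i j) (v : 'I_2 -> A j l) : A i l :=
  \sum_a zmul A (x a) (v a).
Definition mxdot i j l (Y : 'I_2 -> 'I_2 -> A i j) (u : 'I_2 -> A j l) : 'I_2 -> A i l :=
  fun a => \sum_b zmul A (Y a b) (u b).
Definition vmx i j (x : 'I_2 -> A i j) (C : 'M[k]_2) : 'I_2 -> A i j :=
  fun b => \sum_a C a b *: x a.

Lemma mxdot_mxl i j l C (Y : 'I_2 -> 'I_2 -> A i j) (u : 'I_2 -> A j l) :
  mxdot (mxl C Y) u = mxv C (mxdot Y u).
Proof.
apply: functional_extensionality => a; rewrite /mxdot /mxl /mxv.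
under eq_bigr do rewrite zmul_suml.
rewrite exchange_big; apply: eq_bigr => c _; rewrite scaler_sumr.
by apply: eq_bigr => b _; rewrite zmulZl.
Qed.

Lemma mxdot_mxr i j l K (Y : 'I_2 -> 'I_2 -> A i j) (u : 'I_2 -> A j l) :
  mxdot (mxr Y K) u = mxdot Y (mxv K u).
Proof.
apply: functional_extensionality => a; rewrite /mxdot /mxr /mxv.
under eq_bigr do rewrite zmul_suml.
rewrite exchange_big; apply: eq_bigr => c _; rewrite zmul_sumr.
by apply: eq_bigr => b _; rewrite zmulZl zmulZr.
Qed.

Lemma dot_vmx i j l (x : 'I_2 -> A i j) C (v : 'I_2 -> A j l) :
  dot (vmx x C) v = dot x (mxv C v).
Proof.
rewrite /dot /vmx /mxv.
under eq_bigr do rewrite zmul_suml.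
rewrite exchange_big; apply: eq_bigr => a _; rewrite zmul_sumr.
by apply: eq_bigr => b _; rewrite zmulZl zmulZr.
Qed.

Lemma dotB i j l (x : 'I_2 -> A i j) (v w : 'I_2 -> A j l) :
  dot x (fun a => v a - w a) = dot x v - dot x w.
Proof. by rewrite /dot -sumrB; apply: eq_bigr => a _; rewrite zmulBr. Qed.

Lemma dotDZ i j l (x : 'I_2 -> A i j) c (v w : 'I_2 -> A j l) :
  dot x (fun a => c *: v a + w a) = c *: dot x v + dot x w.
Proof.
by rewrite /dot scaler_sumr -big_split; apply: eq_bigr => a _; rewrite zmulDr.
Qed.

Lemma dot_zmul i j l m (x : 'I_2 -> A i j) (v : 'I_2 -> A j l) (s : A l m) :
  zmul A (dot x v) s = dot x (fun a => zmul A (v a) s).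
Proof. by rewrite /dot zmul_suml; apply: eq_bigr => a _; rewrite zmulA. Qed.

End PairProducts.

(* For the resolution
   P_{i4} --z--> P_{i3}^2 --Y--> P_{i1}^2 --x--> P_i  the pair (Y, z) is
   visible in the components A_{i1 i3}, A_{i3 i4}, while x is not; the
   following notions isolate what the window data determines. *)
Section TailBases.
Variables (k : fieldType) (B : zalg k).

Definition tail_bases i1 i3 i4 (Y : 'I_2 -> 'I_2 -> B i1 i3) (z : 'I_2 -> B i3 i4) : Prop :=
 [/\ (forall u : 'I_2 -> B i1 i3, dot u z = 0 <-> exists c : 'I_2 -> k, u = rowcomb c Y),
     (forall c : 'I_2 -> k, rowcomb c Y = (fun _ => 0) -> forall a, c a = 0),
     (forall c : 'I_2 -> k, comb c z = 0 -> forall a, c a = 0)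
   & (forall t : B i3 i4, exists c, t = comb c z)].

Definition presents (W : int -> bool) i i1 i3
    (x : 'I_2 -> B i i1) (Y : 'I_2 -> 'I_2 -> B i1 i3) : Prop :=
 (forall j, W j -> forall t : B i j, exists v : 'I_2 -> B i1 j, t = dot x v) /\
 (forall j, W j -> forall v : 'I_2 -> B i1 j,
    dot x v = 0 <-> exists u : 'I_2 -> B i3 j, v = mxdot Y u).

Lemma tail_bases_half i1 i3 i4 Y z Y' z' :
  @tail_bases i1 i3 i4 Y z -> @tail_bases i1 i3 i4 Y' z' ->
  exists C K : 'M[k]_2, Y' = mxr (mxl C Y) K /\ z = mxv K z'.
Proof.
move=> [kerY _ _ spanz] [kerY' _ indz' spanz'].
have [H EH] : exists H : 'M[k]_2, forall a, z' a = comb (fun b => H a b) z.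
  by apply: (@fin_choice2 _ (fun a c => z' a = comb c z)) => a; exact: spanz.
have [K EK] : exists K : 'M[k]_2, forall a, z a = comb (fun b => K a b) z'.
  by apply: (@fin_choice2 _ (fun a c => z a = comb c z')) => a; exact: spanz'.
have Ez' : z' = mxv H z by apply: functional_extensionality => a; rewrite EH.
have Ez : z = mxv K z' by apply: functional_extensionality => a; rewrite EK.
have HK : H *m K = 1%:M by apply: (mxv_inj indz'); rewrite mxv1 -mxvM -Ez -Ez'.
have [C EC] : exists C : 'M[k]_2, forall a, mxr Y' H a = rowcomb (fun b => C a b) Y.
  apply: (@fin_choice2 _ (fun a c => mxr Y' H a = rowcomb c Y)) => a; apply/kerY.
  rewrite -[mxr Y' H a]/(vmx (Y' a) H) dot_vmx -Ez'; apply/kerY'.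
  by exists (fun e => (a == e)%:R); rewrite rowcomb_delta.
exists C, K; split=> //.
rewrite -[Y' in LHS]mxr1 -HK -mxrM; congr mxr.
by apply: functional_extensionality => a; rewrite EC.
Qed.

Lemma tail_bases_unique i1 i3 i4 Y z Y' z' :
  @tail_bases i1 i3 i4 Y z -> @tail_bases i1 i3 i4 Y' z' ->
  exists C C' K K' : 'M[k]_2, [/\ Y' = mxr (mxl C Y) K, Y = mxr (mxl C' Y') K',
     C' *m C = 1%:M & C *m C' = 1%:M].
Proof.
move=> G G'.
have [C [K [E1 E2]]] := tail_bases_half G G'.
have [C' [K' [E3 E4]]] := tail_bases_half G' G.
have [_ indY indz _] := G; have [_ indY' indz' _] := G'.
have KK : K *m K' = 1%:M by apply: (mxv_inj indz); rewrite -mxvM -E4 -E2 mxv1.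
have KK' : K' *m K = 1%:M by apply: (mxv_inj indz'); rewrite -mxvM -E2 -E4 mxv1.
exists C, C', K, K'; split=> //.
  apply: (mxl_inj indY); rewrite mxl1 -mxlM.
  by apply: esym; rewrite {1}E3 E1 mxl_mxr mxrM KK mxr1.
apply: (mxl_inj indY'); rewrite mxl1 -mxlM.
by apply: esym; rewrite {1}E1 E3 mxl_mxr mxrM KK' mxr1.
Qed.

Lemma presents_change W i i1 i3 (x : 'I_2 -> B i i1) Y Y' (C C' K K' : 'M[k]_2) :
  @presents W i i1 i3 x Y -> Y' = mxr (mxl C Y) K -> Y = mxr (mxl C' Y') K' ->
  C' *m C = 1%:M -> C *m C' = 1%:M -> @presents W i i1 i3 (vmx x C') Y'.
Proof.
move=> [gen rel] E1 E2 CC CC'.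
have ECY : mxl C Y = mxr Y' K' by rewrite E2 mxl_mxr mxlM CC' mxl1.
split.
  move=> j Wj t; have [v ->] := gen j Wj t.
  by exists (mxv C v); rewrite dot_vmx mxvM CC mxv1.
move=> j Wj v; rewrite dot_vmx (rel j Wj); split.
  move=> [u Eu]; exists (mxv K' u).
  by rewrite -mxdot_mxr -ECY mxdot_mxl -Eu mxvM CC' mxv1.
move=> [u ->]; exists (mxv K u).
by rewrite E1 mxdot_mxr mxdot_mxl mxvM CC mxv1.
Qed.

End TailBases.

Lemma dim0_eq0 (K : fieldType) (T : vectType K) :
  \dim {: T} = 0%N -> forall t : T, t = 0.
Proof. by move=> /eqP; rewrite dimv_eq0 => /eqP E t; apply/eqP; rewrite -memv0 -E memvf. Qed.

Lemma dim1_span (K : fieldType) (T : vectType K) (u : T) : \dim {: T} = 1%N -> u != 0 ->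
  forall t : T, exists c : K, t = c *: u.
Proof.
move=> D u0 t; apply/vlineP.
suff -> : (<[u]> = fullv)%VS by exact: memvf.
by apply/eqP; rewrite eqEdim subvf dim_vline u0 D.
Qed.

Section OneDimensionalCorner.
Variables (k : fieldType) (A : zalg k) (i : int).
Hypothesis dim1 : zdim A i i = 1%N.

Lemma zunit_neq0 : zunit A i != 0.
Proof.
apply/eqP => E; have : zdim A i i = 0%N.
  apply: eqP; rewrite dimv_eq0; apply/eqP/vspaceP => t.
  by rewrite memvf memv0 -(zmul1r t) E zmul0r eqxx.
by rewrite dim1.
Qed.

Lemma zunit_span (t : A i i) : exists c : k, t = c *: zunit A i.
Proof. exact: dim1_span dim1 zunit_neq0 t. Qed.

End OneDimensionalCorner.

(* A family of maps phi_ij : A_ij -> B_ij is a graded isomorphism on the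
   indices satisfying P; graded_iso_on A B P is exactly  exists phi, iso_on. *)
Definition iso_on (k : fieldType) (A B : zalg k) (P : int -> bool)
    (phi : forall i j : int, A i j -> B i j) : Prop :=
  [/\ (forall i j, P i -> P j ->
         forall (a : k) (x y : A i j), phi i j (a *: x + y) = a *: phi i j x + phi i j y),
      (forall i j, P i -> P j -> bijective (phi i j)),
      (forall i j l, P i -> P j -> P l ->
         forall (x : A i j) (y : A j l), phi i l (zmul A x y) = zmul B (phi i j x) (phi j l y))
    & (forall i, P i -> phi i i (zunit A i) = zunit B i)].
Arguments iso_on {k} A B P phi.

Lemma iso_on_ext (k : fieldType) (A B : zalg k) (P Q : int -> bool) phi :
  P =1 Q -> iso_on A B P phi -> iso_on A B Q phi.
Proof. by move=> /functional_extensionality ->. Qed.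

Lemma iso_on_op (k : fieldType) (A B : zalg k) P phi :
  iso_on A B P phi -> iso_on (zop A) (zop B) P (fun i j => phi j i).
Proof.
move=> [lin bij mul unit]; split=> //.
- by move=> i j Pi Pj; exact: lin.
- by move=> i j Pi Pj; exact: bij.
- by move=> i j l Pi Pj Pl x y; exact: (mul l j i).
Qed.

Definition dupd (T : int -> Type) (f : forall j, T j) (i : int) (y : T i) : forall j, T j :=
  fun j => match i =P j with ReflectT e => eq_rect i T y j e | ReflectF _ => f j end.

Lemma dupd_eq (T : int -> Type) f i y : @dupd T f i y i = y.
Proof.
rewrite /dupd; case: (i =P i) => [e|n]; last by case: n.
by rewrite (eq_irrelevance e erefl).
Qed.

Lemma dupd_neq (T : int -> Type) f i y j : i != j -> @dupd T f i y j = f j.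
Proof. by rewrite /dupd; case: (i =P j) => // ->; rewrite eqxx. Qed.

Lemma inj_surj_bij (T1 T2 : Type) (f : T1 -> T2) (inh : T1) :
  injective f -> (forall y, exists x, f x = y) -> bijective f.
Proof.
move=> fI fS; pose g y := epsilon (inhabits inh) (fun x => f x = y).
have gK : cancel g f by move=> y; exact: (epsilon_spec (inhabits inh) _ (fS y)).
by exists g => // x; apply: fI; rewrite gK.
Qed.

Lemma scale_inj (k : fieldType) (V : lmodType k) (u : V) (c d : k) :
  u != 0 -> c *: u = d *: u -> c = d.
Proof.
move=> u0 /eqP; rewrite -subr_eq0 -scalerBl scaler_eq0 (negPf u0) orbF subr_eq0.
by move/eqP.
Qed.

Section WindowIso.
Variables (k : fieldType) (A B : zalg k) (W : int -> bool)
  (phi : forall i j, A i j -> B i j).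
Arguments phi : clear implicits.
Hypothesis Hlin : forall i j, W i -> W j ->
  forall (a : k) (x y : A i j), phi i j (a *: x + y) = a *: phi i j x + phi i j y.
Hypothesis Hbij : forall i j, W i -> W j -> bijective (phi i j).
Hypothesis Hmul : forall i j l, W i -> W j -> W l ->
  forall (x : A i j) (y : A j l), phi i l (zmul A x y) = zmul B (phi i j x) (phi j l y).

Section Component.
Variables (i j : int) (Wi : W i) (Wj : W j).

Lemma phi0 : phi i j 0 = 0.
Proof.
have := Hlin Wi Wj 1 0 0; rewrite !scale1r addr0 => H.
by apply: (@addrI _ (phi i j 0)); rewrite addr0 -H.
Qed.

Lemma phiD x y : phi i j (x + y) = phi i j x + phi i j y.
Proof. by have := Hlin Wi Wj 1 x y; rewrite !scale1r. Qed.

Lemma phiZ a x : phi i j (a *: x) = a *: phi i j x.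
Proof. by rewrite -(addr0 (a *: x)) Hlin // phi0 addr0. Qed.

Lemma phiB x y : phi i j (x - y) = phi i j x - phi i j y.
Proof. by rewrite -scaleN1r addrC Hlin // addrC scaleN1r. Qed.

Lemma phi_inj : injective (phi i j).
Proof. exact: bij_inj (Hbij Wi Wj). Qed.

Lemma phi_eq0 x : phi i j x = 0 <-> x = 0.
Proof. by split=> [H|->]; [apply: phi_inj; rewrite H phi0 | exact: phi0]. Qed.

Lemma phi_comb (c : 'I_2 -> k) (v : 'I_2 -> A i j) :
  phi i j (comb c v) = comb c (fun a => phi i j (v a)).
Proof. by rewrite /comb !sum2 phiD !phiZ. Qed.

Lemma phi_rowcomb (c : 'I_2 -> k) (Y : 'I_2 -> 'I_2 -> A i j) :
  (fun b => phi i j (rowcomb c Y b)) = rowcomb c (fun a b => phi i j (Y a b)).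
Proof. by apply: functional_extensionality => b; rewrite /rowcomb !sum2 phiD !phiZ. Qed.

Lemma phi_surj (u : B i j) : exists u0 : A i j, u = phi i j u0.
Proof. by have [g _ gK] := Hbij Wi Wj; exists (g u); rewrite gK. Qed.

Lemma phi_surj2 (u : 'I_2 -> B i j) :
  exists u0 : 'I_2 -> A i j, u = (fun a => phi i j (u0 a)).
Proof.
have [g _ gK] := Hbij Wi Wj.
by exists (fun a => g (u a)); apply: functional_extensionality => a; rewrite gK.
Qed.

Lemma phi_inj2 (u v : 'I_2 -> A i j) :
  (fun a => phi i j (u a)) = (fun a => phi i j (v a)) -> u = v.
Proof.
move=> E; apply: functional_extensionality => a.
exact: phi_inj (equal_f E a).
Qed.

End Component.

Lemma phi_dot i j l (Wi : W i) (Wj : W j) (Wl : W l)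
    (x : 'I_2 -> A i j) (v : 'I_2 -> A j l) :
  phi i l (dot x v) = dot (fun a => phi i j (x a)) (fun a => phi j l (v a)).
Proof. by rewrite /dot !sum2 phiD // !Hmul. Qed.

Lemma phi_mxdot i j l (Wi : W i) (Wj : W j) (Wl : W l)
    (Y : 'I_2 -> 'I_2 -> A i j) (u : 'I_2 -> A j l) :
  (fun a => phi i l (mxdot Y u a)) =
  mxdot (fun a b => phi i j (Y a b)) (fun a => phi j l (u a)).
Proof.
by apply: functional_extensionality => a; rewrite /mxdot !sum2 phiD // !Hmul.
Qed.

Lemma tail_bases_transport i1 i3 i4 (W1 : W i1) (W3 : W i3) (W4 : W i4) Y z :
  @tail_bases k A i1 i3 i4 Y z ->
  @tail_bases k B i1 i3 i4 (fun a b => phi i1 i3 (Y a b)) (fun a => phi i3 i4 (z a)).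
Proof.
move=> [kerY indY indz spanz]; split.
- move=> u; have [u0 ->] := phi_surj2 W1 W3 u.
  rewrite -phi_dot // phi_eq0 // kerY; split.
    by move=> [c ->]; exists c; rewrite phi_rowcomb.
  by move=> [c Ec]; exists c; apply: (phi_inj2 W1 W3); rewrite Ec phi_rowcomb.
- move=> c Ec; apply: indY; apply: (phi_inj2 W1 W3); rewrite phi_rowcomb // Ec.
  by apply: functional_extensionality => b; rewrite phi0.
- by move=> c Ec; apply: indz; apply/(phi_eq0 W3 W4); rewrite phi_comb.
- move=> t; have [t0 ->] := phi_surj W3 W4 t; have [c ->] := spanz t0.
  by exists c; rewrite phi_comb.
Qed.

Hypothesis Hunit : forall i, W i -> phi i i (zunit A i) = zunit B i.

(* The index i lies outside W, the row A_{i,*} is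
   presented over the window by x and Y (and B_{i,*} by x' and phi(Y)), and
   nothing maps from the window into i.  Then  x . v |-> x' . phi(v)  extends
   phi to W + {i}. *)
Section RowExtension.
Variables (i i1 i3 : int).
Hypotheses (Wni : ~~ W i) (W1 : W i1) (W3 : W i3).
Hypothesis dim0A : forall j, W j -> zdim A j i = 0%N.
Hypothesis dim0B : forall j, W j -> zdim B j i = 0%N.
Hypothesis dim1A : zdim A i i = 1%N.
Hypothesis dim1B : zdim B i i = 1%N.
Variables (x : 'I_2 -> A i i1) (Y : 'I_2 -> 'I_2 -> A i1 i3) (x' : 'I_2 -> B i i1).
Hypothesis presA : presents W x Y.
Hypothesis presB : presents W x' (fun a b => phi i1 i3 (Y a b)).

Lemma zeroA j : W j -> forall t : A j i, t = 0.
Proof. by move=> Wj; apply: dim0_eq0; exact: dim0A. Qed.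

Lemma zeroB j : W j -> forall t : B j i, t = 0.
Proof. by move=> Wj; apply: dim0_eq0; exact: dim0B. Qed.

Lemma relations_match j (Wj : W j) (v : 'I_2 -> A i1 j) :
  dot x v = 0 <-> dot x' (fun a => phi i1 j (v a)) = 0.
Proof.
have [_ relA] := presA; have [_ relB] := presB.
rewrite (relA j Wj) (relB j Wj); split.
  by move=> [u ->]; exists (fun a => phi i3 j (u a)); apply: phi_mxdot.
move=> [u' Eu']; have [u0 Eu0] := phi_surj2 W3 Wj u'; exists u0.
by apply: (phi_inj2 W1 Wj); rewrite Eu' Eu0 phi_mxdot.
Qed.

Definition corner_coef (t : A i i) : k :=
  epsilon (inhabits 0) (fun c => t = c *: zunit A i).

Lemma corner_coefE t : t = corner_coef t *: zunit A i.
Proof. exact: (epsilon_spec (inhabits 0) _ (zunit_span dim1A t)). Qed.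

Lemma corner_coef_scale c : corner_coef (c *: zunit A i) = c.
Proof. by apply: (scale_inj (zunit_neq0 dim1A)); rewrite -corner_coefE. Qed.

Definition corner_map (t : A i i) : B i i := corner_coef t *: zunit B i.

Lemma corner_map_scale c : corner_map (c *: zunit A i) = c *: zunit B i.
Proof. by rewrite /corner_map corner_coef_scale. Qed.

Lemma corner_map_lin a (t s : A i i) :
  corner_map (a *: t + s) = a *: corner_map t + corner_map s.
Proof.
rewrite [t]corner_coefE [s]corner_coefE scalerA -scalerDl !corner_map_scale.
by rewrite scalerDl scalerA.
Qed.

Lemma corner_map_bij : bijective corner_map.
Proof.
apply: (inj_surj_bij 0).
  move=> t s /(scale_inj (zunit_neq0 dim1B)) E.
  by rewrite [t]corner_coefE [s]corner_coefE E.
by move=> t'; have [c ->] := zunit_span dim1B t'; exists (c *: zunit A i); rewrite corner_map_scale.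
Qed.

Definition coords j (t : A i j) : 'I_2 -> A i1 j :=
  epsilon (inhabits (fun _ => 0)) (fun v => t = dot x v).
Definition row_map j (t : A i j) : B i j := dot x' (fun a => phi i1 j (coords t a)).

Lemma row_mapE j (Wj : W j) v : row_map (dot x v) = dot x' (fun a => phi i1 j (v a)).
Proof.
rewrite /row_map; set v' := coords _.
have E : dot x v = dot x v' by exact: (epsilon_spec _ (fun w => dot x v = dot x w) (ex_intro _ v erefl)).
have : dot x (fun a => v' a - v a) = 0 by rewrite dotB E subrr.
move/(relations_match Wj).
have -> : (fun a => phi i1 j (v' a - v a)) = (fun a => phi i1 j (v' a) - phi i1 j (v a)).
  by apply: functional_extensionality => a; rewrite phiB.
by rewrite dotB => /eqP; rewrite subr_eq0 => /eqP.
Qed.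

Lemma row_map_lin j (Wj : W j) a (t s : A i j) :
  row_map (a *: t + s) = a *: row_map t + row_map s.
Proof.
have [gen _] := presA; have [v ->] := gen j Wj t; have [w ->] := gen j Wj s.
rewrite -dotDZ !row_mapE // -dotDZ; congr dot.
by apply: functional_extensionality => b; rewrite Hlin.
Qed.

Lemma row_map_bij j (Wj : W j) : bijective (@row_map j).
Proof.
have [genA _] := presA; have [genB _] := presB.
apply: (inj_surj_bij 0).
  move=> t s; have [v ->] := genA j Wj t; have [w ->] := genA j Wj s.
  rewrite !row_mapE // => /eqP; rewrite -subr_eq0 -dotB => /eqP.
  have -> : (fun a => phi i1 j (v a) - phi i1 j (w a)) = (fun a => phi i1 j (v a - w a)).
    by apply: functional_extensionality => a; rewrite phiB.
  by move/(relations_match Wj); rewrite dotB => /eqP; rewrite subr_eq0 => /eqP.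
move=> t'; have [v' ->] := genB j Wj t'; have [v0 ->] := phi_surj2 W1 Wj v'.
by exists (dot x v0); rewrite row_mapE.
Qed.

Lemma row_map_mul j l (Wj : W j) (Wl : W l) (t : A i j) (s : A j l) :
  row_map (zmul A t s) = zmul B (row_map t) (phi j l s).
Proof.
have [gen _] := presA; have [v ->] := gen j Wj t.
rewrite dot_zmul !row_mapE // dot_zmul; congr dot.
by apply: functional_extensionality => a; rewrite Hmul.
Qed.

Lemma row_map0 j (Wj : W j) : @row_map j 0 = 0.
Proof.
have := row_map_lin Wj 1 0 0; rewrite !scale1r addr0 => H.
by apply: (@addrI _ (row_map (0 : A i j))); rewrite addr0 -H.
Qed.

Lemma row_mapZ j (Wj : W j) c (t : A i j) : row_map (c *: t) = c *: row_map t.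
Proof. by rewrite -(addr0 (c *: t)) row_map_lin // row_map0 // addr0. Qed.

(* The extension: the corner map at (i, i), row_map on row i, zero on
   column i (where both sides vanish), and phi elsewhere. *)
Definition ext_map : forall j l, A j l -> B j l :=
  @dupd (fun j => forall l, A j l -> B j l)
    (fun j => @dupd (fun l => A j l -> B j l) (phi j) i (fun _ => 0)) i
    (@dupd (fun l => A i l -> B i l) (@row_map) i corner_map).

Lemma ext_map_ii : @ext_map i i = corner_map.
Proof. by rewrite /ext_map !dupd_eq. Qed.
Lemma ext_map_ij j : j != i -> @ext_map i j = @row_map j.
Proof. by move=> ji; rewrite /ext_map dupd_eq dupd_neq // eq_sym. Qed.
Lemma ext_map_ji j : j != i -> @ext_map j i = (fun _ => 0).
Proof. by move=> ji; rewrite /ext_map dupd_neq 1?eq_sym // dupd_eq. Qed.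
Lemma ext_map_jl j l : j != i -> l != i -> @ext_map j l = phi j l.
Proof. by move=> ji li; rewrite /ext_map !dupd_neq // eq_sym. Qed.

Lemma window_case j : W j || (j == i) -> j = i \/ (W j /\ j != i).
Proof.
case/orP => [Wj|/eqP ->]; [right | by left].
by split=> //; apply: contraNneq Wni => <-.
Qed.

Lemma ext_map_iso : iso_on A B (fun j => W j || (j == i)) ext_map.
Proof.
split.
- move=> j l /window_case [->|[Wj ji]] /window_case [->|[Wl li]] a t s.
  + by rewrite ext_map_ii corner_map_lin.
  + by rewrite ext_map_ij // row_map_lin.
  + by rewrite ext_map_ji // scaler0 addr0.
  + by rewrite ext_map_jl // Hlin.
- move=> j l /window_case [->|[Wj ji]] /window_case [->|[Wl li]].
  + by rewrite ext_map_ii; exact: corner_map_bij.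
  + by rewrite ext_map_ij //; exact: row_map_bij.
  + rewrite ext_map_ji //; apply: (inj_surj_bij 0).
      by move=> t s _; rewrite (zeroA Wj t) (zeroA Wj s).
    by move=> t'; exists 0; rewrite (zeroB Wj t').
  + by rewrite ext_map_jl //; exact: Hbij.
- move=> j l m /window_case [->|[Wj ji]] /window_case [->|[Wl li]]
    /window_case [->|[Wm mi]] t s.
  + have [c ->] := zunit_span dim1A t; have [d ->] := zunit_span dim1A s.
    by rewrite ext_map_ii !corner_map_scale !zmul_unitl !scalerA corner_map_scale.
  + have [c ->] := zunit_span dim1A t.
    by rewrite ext_map_ii ext_map_ij // zmul_unitl corner_map_scale zmul_unitl row_mapZ.
  + by rewrite (ext_map_ji li) (zeroA Wl s) !zmul0r ext_map_ii -(scale0r (zunit A i)) corner_map_scale scale0r.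
  + by rewrite (ext_map_ij mi) (ext_map_ij li) (ext_map_jl li mi) row_map_mul.
  + by rewrite (zeroA Wj t) zmul0l (ext_map_ji ji) zmul0l.
  + by rewrite (zeroA Wj t) zmul0l (ext_map_ji ji) zmul0l (ext_map_jl ji mi) phi0.
  + by rewrite (zeroA Wl s) zmul0r (ext_map_ji ji) (ext_map_ji li) zmul0r.
  + by rewrite (ext_map_jl ji li) (ext_map_jl li mi) (ext_map_jl ji mi) Hmul.
- move=> j /window_case [->|[Wj ji]]; last by rewrite ext_map_jl // Hunit.
  by rewrite ext_map_ii -(scale1r (zunit A i)) corner_map_scale scale1r.
Qed.

Lemma ext_map_agrees j l : W j -> W l -> @ext_map j l = phi j l.
Proof. by move=> Wj Wl; rewrite ext_map_jl //; apply: contraNneq Wni => <-. Qed.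

End RowExtension.

(* Extension of phi by one row i, given the tail bases and presentations of
   the resolutions of S_i on both sides: phi(Y) is equivalent to Y', so after
   a change of basis of x' the hypotheses of RowExtension hold. *)
Lemma extend_row i i1 i3 i4 : ~~ W i -> W i1 -> W i3 -> W i4 ->
  (forall j, W j -> zdim A j i = 0%N) -> (forall j, W j -> zdim B j i = 0%N) ->
  zdim A i i = 1%N -> zdim B i i = 1%N ->
  forall x Y z x' Y' z',
  @tail_bases k A i1 i3 i4 Y z -> @presents k A W i i1 i3 x Y ->
  @tail_bases k B i1 i3 i4 Y' z' -> @presents k B W i i1 i3 x' Y' ->
  exists psi, iso_on A B (fun j => W j || (j == i)) psi /\
              forall j l, W j -> W l -> psi j l = phi j l.
Proof.
move=> Wni W1 W3 W4 dim0A dim0B dim1A dim1B x Y z x' Y' z' tailA presA tailB presB.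
have tailAB := tail_bases_transport W1 W3 W4 tailA.
have [C [C' [K [K' [E1 E2 CC CC']]]]] := tail_bases_unique tailB tailAB.
have presB' := presents_change presB E1 E2 CC CC'.
exists (@ext_map i i1 x (vmx x' C')); split.
  exact: (ext_map_iso Wni W1 W3 dim0A dim0B dim1A dim1B presA presB').
exact: ext_map_agrees.
Qed.

End WindowIso.

Lemma limg_sub_lker (K : fieldType) (U V W : vectType K) (f : 'Hom(U, V)) (g : 'Hom(V, W)) :
  (forall u, g (f u) = 0) -> (limg f <= lker g)%VS.
Proof. by move=> H; apply/subvP => y /memv_imgP [u _ ->]; rewrite memv_ker H. Qed.

Section ExactFromDimensions.
Variables (K : fieldType) (U V W X : vectType K).

Lemma exact_from_dims (d0 : 'Hom(U, V)) (d1 : 'Hom(V, W)) (d2 : 'Hom(W, X)) :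
  (forall u, d1 (d0 u) = 0) -> (forall v, d2 (d1 v) = 0) ->
  (\dim (lker d0) + (\dim (lker d1) - \dim (limg d0)) + (\dim (lker d2) - \dim (limg d1))
     + (\dim {: X} - \dim (limg d2)))%N = 0%N ->
  [/\ forall v, d1 v = 0 -> exists u, v = d0 u,
      forall w, d2 w = 0 -> exists v, w = d1 v
    & forall x, exists w, x = d2 w].
Proof.
move=> C1 C2 /eqP; rewrite !addn_eq0 !subn_eq0 => /andP[/andP[/andP[_ h1] h2] h3].
have E1 : limg d0 = lker d1 by apply/eqP; rewrite eqEdim limg_sub_lker ?h1 ?h2.
have E2 : limg d1 = lker d2 by apply/eqP; rewrite eqEdim limg_sub_lker ?h1 ?h2.
have E3 : limg d2 = fullv by apply/eqP; rewrite eqEdim subvf h3.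
split.
- by move=> v /eqP; rewrite -memv_ker -E1 => /memv_imgP [u _ ->]; exists u.
- by move=> w /eqP; rewrite -memv_ker -E2 => /memv_imgP [v _ ->]; exists v.
- move=> x; have /memv_imgP [w _ ->] : x \in limg d2 by rewrite E3 memvf.
  by exists w.
Qed.

End ExactFromDimensions.

Lemma linfunE_lin (k : fieldType) (U V : vectType k) (f : U -> V) :
  (forall (a : k) x y, f (a *: x + y) = a *: f x + f y) -> forall u, linfun f u = f u.
Proof.
move=> Hf; pose F : {linear U -> V} := HB.pack f (GRing.isLinear.Build k U V _ f Hf).
by move=> u; exact: (lfunE F u).
Qed.

Section CubicResolutions.
Variables (k : fieldType) (A : zalg k) (res : forall l : int, res_data A l).
Hypothesis Hcon : zconnected A.
Hypothesis Hres : forall l, is_cubic_resolution (res l).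
Hypothesis Hgor : forall i : int, exists l0 : int,
   ext_total i (res l0) = 1%N /\ forall l, l != l0 -> ext_total i (res l) = 0%N.

Lemma zero_below i j : j < i -> forall t : A i j, t = 0.
Proof. by move=> ji; apply: dim0_eq0; exact: Hcon.1. Qed.

Section Differentials.
Variables (i l : int).
Let r := res l.

Lemma ext_d0E (x : A i l) : ext_d0 i r x = (zmul A x (rx1 r), zmul A x (rx2 r)).
Proof. by rewrite /ext_d0 linfunE_lin // => a u v; rewrite !zmulDl. Qed.

Lemma ext_d1E (v : A i (l + 1) * A i (l + 1)) : ext_d1 i r v =
   (zmul A v.1 (ry11 r) + zmul A v.2 (ry21 r), zmul A v.1 (ry12 r) + zmul A v.2 (ry22 r)).
Proof.
rewrite /ext_d1 linfunE_lin // => a [u1 u2] [v1 v2] /=.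
by rewrite !zmulDl; congr pair; rewrite /= scalerDr addrACA.
Qed.

Lemma ext_d2E (u : A i (l + 3) * A i (l + 3)) : ext_d2 i r u =
   zmul A u.1 (rz1 r) + zmul A u.2 (rz2 r).
Proof.
rewrite /ext_d2 linfunE_lin // => a [u1 u2] [v1 v2] /=.
by rewrite !zmulDl scalerDr addrACA.
Qed.

End Differentials.

Lemma res_xY l :
  zmul A (rx1 (res l)) (ry11 (res l)) + zmul A (rx2 (res l)) (ry21 (res l)) = 0 /\
  zmul A (rx1 (res l)) (ry12 (res l)) + zmul A (rx2 (res l)) (ry22 (res l)) = 0.
Proof.
have [_ _ exact1 _] := Hres l; split.
  apply/(exact1 (l + 3)); exists (zunit A (l + 3)), 0.
  by rewrite !zmul1r !zmul0r !addr0.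
apply/(exact1 (l + 3)); exists 0, (zunit A (l + 3)).
by rewrite !zmul1r !zmul0r !add0r.
Qed.

Lemma res_Yz l :
  zmul A (ry11 (res l)) (rz1 (res l)) + zmul A (ry12 (res l)) (rz2 (res l)) = 0 /\
  zmul A (ry21 (res l)) (rz1 (res l)) + zmul A (ry22 (res l)) (rz2 (res l)) = 0.
Proof.
have [_ exact2 _ _] := Hres l.
by apply/(exact2 (l + 4)); exists (zunit A (l + 4)); rewrite !zmul1r.
Qed.

Lemma res_Yz_mul i l (u1 u2 : A i (l + 1)) :
  zmul A (zmul A u1 (ry11 (res l)) + zmul A u2 (ry21 (res l))) (rz1 (res l)) +
  zmul A (zmul A u1 (ry12 (res l)) + zmul A u2 (ry22 (res l))) (rz2 (res l)) = 0.
Proof.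
have [yz1 yz2] := res_Yz l.
by rewrite !zmulDl2 !zmulA addrACA -!zmulDr2 yz1 yz2 !zmul0r addr0.
Qed.

Lemma ext_vanishing_exact i l : ext_total i (res l) = 0%N ->
 [/\ (forall v1 v2 : A i (l + 1),
        zmul A v1 (ry11 (res l)) + zmul A v2 (ry21 (res l)) = 0 ->
        zmul A v1 (ry12 (res l)) + zmul A v2 (ry22 (res l)) = 0 ->
        exists x : A i l, v1 = zmul A x (rx1 (res l)) /\ v2 = zmul A x (rx2 (res l))),
     (forall u1 u2 : A i (l + 3), zmul A u1 (rz1 (res l)) + zmul A u2 (rz2 (res l)) = 0 ->
        exists v1 v2 : A i (l + 1),
          u1 = zmul A v1 (ry11 (res l)) + zmul A v2 (ry21 (res l)) /\
          u2 = zmul A v1 (ry12 (res l)) + zmul A v2 (ry22 (res l)))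
   & (forall w : A i (l + 4), exists u1 u2 : A i (l + 3),
        w = zmul A u1 (rz1 (res l)) + zmul A u2 (rz2 (res l)))].
Proof.
move=> ext0.
have [xy1 xy2] := res_xY l.
have d10 : forall x, ext_d1 i (res l) (ext_d0 i (res l) x) = 0.
  by move=> x; rewrite ext_d0E ext_d1E /= !zmulA -!zmulDr2 xy1 xy2 !zmul0r.
have d21 : forall v, ext_d2 i (res l) (ext_d1 i (res l) v) = 0.
  by move=> v; rewrite ext_d1E ext_d2E res_Yz_mul.
have [E1 E2 E3] := exact_from_dims d10 d21 ext0.
split.
- move=> v1 v2 h1 h2.
  have /E1 [x Ex] : ext_d1 i (res l) (v1, v2) = 0 by rewrite ext_d1E /= h1 h2.
  by exists x; move: Ex; rewrite ext_d0E => [[-> ->]].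
- move=> u1 u2 h.
  have /E2 [[v1 v2] Ev] : ext_d2 i (res l) (u1, u2) = 0 by rewrite ext_d2E /= h.
  by exists v1, v2; move: Ev; rewrite ext_d1E => [[-> ->]].
- by move=> w; have [[u1 u2] ->] := E3 w; exists u1, u2; rewrite ext_d2E.
Qed.

(* Ext^*(S_l, P_i) vanishes unless l = i - 4: for l = i - 4 the top term
   Ext^3(S_l, P_i) = A_ii is nonzero, so i - 4 is the Gorenstein index. *)
Lemma ext_concentrated i l : l != i - 4 -> ext_total i (res l) = 0%N.
Proof.
have [l0 [_ H0]] := Hgor i.
move=> hl; suff E : l0 = i - 4 by apply: H0; rewrite E.
apply/eqP; apply: contraT; rewrite eq_sym => ne.
move: (H0 (i - 4) ne); rewrite /ext_total.
have -> : limg (ext_d2 i (res (i - 4))) = 0%VS.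
  apply/eqP; rewrite -subv0; apply/subvP => w /memv_imgP [u _ ->].
  have lt : i - 4 + 3 < i by lia.
  by rewrite memv0 ext_d2E (zero_below lt u.1) (zero_below lt u.2) !zmul0l addr0.
rewrite dimv0 subn0 => /eqP; rewrite !addn_eq0 => /andP[_ /eqP].
have -> : i - 4 + 4 = i by lia.
by rewrite -/(zdim A i i) Hcon.2.
Qed.

Definition res_x l : 'I_2 -> A l (l + 1) := mk2 (rx1 (res l)) (rx2 (res l)).
Definition res_Y l : 'I_2 -> 'I_2 -> A (l + 1) (l + 3) :=
  mk2 (mk2 (ry11 (res l)) (ry12 (res l))) (mk2 (ry21 (res l)) (ry22 (res l))).
Definition res_z l : 'I_2 -> A (l + 3) (l + 4) := mk2 (rz1 (res l)) (rz2 (res l)).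

Lemma scale_unit_eq0 j (c : k) : c *: zunit A j = 0 -> c = 0.
Proof. by move/eqP; rewrite scaler_eq0 (negPf (zunit_neq0 (Hcon.2 j))) orbF => /eqP. Qed.

Lemma zunit_spanA j (t : A j j) : exists c : k, t = c *: zunit A j.
Proof. exact: zunit_span (Hcon.2 j) t. Qed.

(* Ext^*(S_l, P_{l+1}) = Ext^*(S_l, P_{l+3}) = 0 makes (Y, z) tail bases. *)
Lemma res_tail_bases l : tail_bases (res_Y l) (res_z l).
Proof.
have [E1 E2 _] := ext_vanishing_exact (@ext_concentrated (l + 1) l ltac:(lia)).
have [_ F2 F3] := ext_vanishing_exact (@ext_concentrated (l + 3) l ltac:(lia)).
split.
- move=> u; rewrite /dot sum2 /res_z mk2_0 mk2_1; split.
    move=> /E2 [v1 [v2 [Eu1 Eu2]]].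
    have [c1 Ec1] := zunit_spanA v1; have [c2 Ec2] := zunit_spanA v2.
    exists (mk2 c1 c2); apply: fun2_eq;
      by rewrite /rowcomb sum2 !mk2_0 !mk2_1 /res_Y !mk2_0 !mk2_1 ?Eu1 ?Eu2 Ec1 Ec2 !zmul_unitl.
  move=> [c ->]; rewrite /rowcomb !sum2 /res_Y !mk2_0 !mk2_1.
  have := res_Yz_mul (c ord0 *: zunit A (l + 1)) (c ord_max *: zunit A (l + 1)).
  by rewrite !zmul_unitl.
- move=> c Ec; have h0 := equal_f Ec ord0; have h1 := equal_f Ec ord_max.
  move: h0 h1; rewrite /rowcomb !sum2 /res_Y !mk2_0 !mk2_1 => h0 h1.
  have := E1 (c ord0 *: zunit A (l + 1)) (c ord_max *: zunit A (l + 1)).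
  rewrite !zmul_unitl => /(_ h0 h1) [x [Ex1 Ex2]].
  have lt : l < l + 1 by lia.
  move: Ex1 Ex2; rewrite (zero_below lt x) !zmul0l => /scale_unit_eq0 e0 /scale_unit_eq0 e1.
  by move=> a; case: (ord2P a) => ->.
- move=> c; rewrite /comb sum2 /res_z mk2_0 mk2_1 => Ec.
  have := F2 (c ord0 *: zunit A (l + 3)) (c ord_max *: zunit A (l + 3)).
  rewrite !zmul_unitl => /(_ Ec) [v1 [v2 [Ev1 Ev2]]].
  have lt : l + 1 < l + 3 by lia.
  move: Ev1 Ev2; rewrite (zero_below lt v1) (zero_below lt v2) !zmul0l addr0.
  move=> /scale_unit_eq0 e0 /scale_unit_eq0 e1.
  by move=> a; case: (ord2P a) => ->.
- move=> t; have [u1 [u2 ->]] := F3 t.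
  have [c1 ->] := zunit_spanA u1; have [c2 ->] := zunit_spanA u2.
  by exists (mk2 c1 c2); rewrite /comb sum2 /res_z !mk2_0 !mk2_1 !zmul_unitl.
Qed.

Lemma res_presents l (W : int -> bool) :
  (forall j, W j -> j != l) -> presents W (res_x l) (res_Y l).
Proof.
move=> HW; have [_ _ exact1 exact0] := Hres l; split.
  move=> j Wj t; have [v1 [v2 Et]] := exact0 j t (HW j Wj).
  by exists (mk2 v1 v2); rewrite /dot sum2 /res_x ?mk2_0 ?mk2_1.
move=> j Wj v; rewrite /dot sum2 /res_x mk2_0 mk2_1 (exact1 j); split.
  move=> [u1 [u2 [E1 E2]]]; exists (mk2 u1 u2); apply: fun2_eq;
    by rewrite /mxdot !sum2 /res_Y ?mk2_0 ?mk2_1.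
move=> [u ->]; exists (u ord0), (u ord_max).
by rewrite /mxdot !sum2 /res_Y ?mk2_0 ?mk2_1.
Qed.

(* In the opposite algebra the roles are exchanged: the column A_{*,l+4} is
   presented by z, with relations Y^T, and (Y^T, x) are tail bases, by
   exactness of the resolution and of its dual. *)
Definition res_YT l : 'I_2 -> 'I_2 -> zop A (l + 3) (l + 1) := fun a b => res_Y l b a.

Lemma res_op_tail_bases l : @tail_bases k (zop A) (l + 3) (l + 1) l (res_YT l) (res_x l).
Proof.
have [_ exact2 exact1 exact0] := Hres l; split.
- move=> u; rewrite /dot sum2 !zopE /res_x mk2_0 mk2_1 (exact1 (l + 3)); split.
    move=> [w1 [w2 [E1 E2]]].
    have [c1 Ec1] := zunit_spanA w1; have [c2 Ec2] := zunit_spanA w2.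
    exists (mk2 c1 c2); apply: fun2_eq;
      by rewrite /rowcomb sum2 ?mk2_0 ?mk2_1 /res_YT /res_Y ?mk2_0 ?mk2_1 ?E1 ?E2 Ec1 Ec2 !zmul_unitr.
  move=> [c ->]; exists (c ord0 *: zunit A (l + 3)), (c ord_max *: zunit A (l + 3)).
  by rewrite /rowcomb !sum2 /res_YT /res_Y ?mk2_0 ?mk2_1 !zmul_unitr.
- move=> c Ec; have h0 := equal_f Ec ord0; have h1 := equal_f Ec ord_max.
  move: h0 h1; rewrite /rowcomb !sum2 /res_YT /res_Y ?mk2_0 ?mk2_1 => h0 h1.
  have := exact2 (l + 3) (c ord0 *: zunit A (l + 3)) (c ord_max *: zunit A (l + 3)).
  rewrite !zmul_unitr => -[/(_ (conj h0 h1)) [w [Ew1 Ew2]] _].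
  have lt : l + 3 < l + 4 by lia.
  move: Ew1 Ew2; rewrite (zero_below lt w) !zmul0r => /scale_unit_eq0 e0 /scale_unit_eq0 e1.
  by move=> a; case: (ord2P a) => ->.
- move=> c; rewrite /comb sum2 /res_x mk2_0 mk2_1 => Ec.
  have := exact1 (l + 1) (c ord0 *: zunit A (l + 1)) (c ord_max *: zunit A (l + 1)).
  rewrite !zmul_unitr => -[/(_ Ec) [u1 [u2 [Eu1 Eu2]]] _].
  have lt : l + 1 < l + 3 by lia.
  move: Eu1 Eu2; rewrite (zero_below lt u1) (zero_below lt u2) !zmul0r addr0.
  move=> /scale_unit_eq0 e0 /scale_unit_eq0 e1.
  by move=> a; case: (ord2P a) => ->.
- move=> t; have ne : l + 1 != l by lia.
  have [v1 [v2 ->]] := exact0 (l + 1) t ne.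
  have [c1 ->] := zunit_spanA v1; have [c2 ->] := zunit_spanA v2.
  by exists (mk2 c1 c2); rewrite /comb sum2 /res_x ?mk2_0 ?mk2_1 !zmul_unitr.
Qed.

Lemma res_op_presents l (W : int -> bool) : (forall j, W j -> j != l + 4) ->
  @presents k (zop A) W (l + 4) (l + 3) (l + 1) (res_z l) (res_YT l).
Proof.
move=> HW; split=> j Wj.
  have hl : l != j - 4 by move: (HW j Wj); lia.
  have [_ _ F3] := ext_vanishing_exact (ext_concentrated hl).
  move=> t; have [u1 [u2 Et]] := F3 t.
  by exists (mk2 u1 u2); rewrite /dot sum2 !zopE /res_z ?mk2_0 ?mk2_1.
have hl : l != j - 4 by move: (HW j Wj); lia.
have [_ F2 _] := ext_vanishing_exact (ext_concentrated hl).
move=> v; rewrite /dot sum2 !zopE /res_z mk2_0 mk2_1; split.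
  move=> /F2 [v1 [v2 [E1 E2]]]; exists (mk2 v1 v2); apply: fun2_eq;
    by rewrite /mxdot !sum2 !zopE /res_YT /res_Y ?mk2_0 ?mk2_1.
move=> [u ->]; rewrite /mxdot !sum2 !zopE /res_YT /res_Y ?mk2_0 ?mk2_1.
exact: res_Yz_mul.
Qed.

End CubicResolutions.

Definition window (a b : int) : int -> bool := fun j => (a <= j) && (j <= b).

Section Gluing.
Variables (k : fieldType) (A B : zalg k) (P : nat -> int -> bool) (N : int -> nat).
Hypothesis P_mono : forall n m i, (n <= m)%N -> P n i -> P m i.
Hypothesis P_N : forall i n, (N i <= n)%N -> P n i.
Variable iso : nat -> forall i j, A i j -> B i j.
Arguments iso : clear implicits.
Hypothesis iso_iso : forall n, iso_on A B (P n) (iso n).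
Hypothesis iso_next : forall n i j, P n i -> P n j -> iso n.+1 i j = iso n i j.

Lemma iso_stable n m : (n <= m)%N -> forall i j, P n i -> P n j -> iso m i j = iso n i j.
Proof.
elim: m => [|m IH]; first by rewrite leqn0 => /eqP ->.
rewrite leq_eqVlt => /orP [/eqP <- //| /[!ltnS] nm] i j Pi Pj.
by rewrite iso_next ?IH //; apply: P_mono nm _.
Qed.

Lemma iso_settled m u v : (N u + N v <= m)%N -> iso m u v = iso (N u + N v) u v.
Proof. by move=> h; apply: iso_stable => //; apply: P_N; lia. Qed.

Lemma glue_iso : exists psi, iso_on A B (fun _ => true) psi.
Proof.
exists (fun i j => iso (N i + N j) i j); split.
- move=> i j _ _; have [lin _ _ _] := iso_iso (N i + N j).
  by apply: lin; apply: P_N; lia.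
- move=> i j _ _; have [_ bij _ _] := iso_iso (N i + N j).
  by apply: bij; apply: P_N; lia.
- move=> i j l _ _ _ x y; set M := (N i + N j + N l)%N.
  have [_ _ mul _] := iso_iso M.
  rewrite -!(@iso_settled M) /M; try lia.
  by rewrite mul //; apply: P_N; lia.
- move=> i _; have [_ _ _ unit] := iso_iso (N i + N i).
  by apply: unit; apply: P_N; lia.
Qed.

End Gluing.

Section WindowExtension.
Variables (k : fieldType) (A B : zalg k).
Variables (resA : forall l, res_data A l) (resB : forall l, res_data B l).
Hypothesis HconA : zconnected A.
Hypothesis HresA : forall l, is_cubic_resolution (resA l).
Hypothesis HgorA : forall i : int, exists l0 : int,
   ext_total i (resA l0) = 1%N /\ forall l, l != l0 -> ext_total i (resA l) = 0%N.
Hypothesis HconB : zconnected B.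
Hypothesis HresB : forall l, is_cubic_resolution (resB l).
Hypothesis HgorB : forall i : int, exists l0 : int,
   ext_total i (resB l0) = 1%N /\ forall l, l != l0 -> ext_total i (resB l) = 0%N.

Lemma extend_left a b phi : a + 3 <= b -> iso_on A B (window a b) phi ->
  exists psi, iso_on A B (window (a - 1) b) psi /\
              forall j l, window a b j -> window a b l -> psi j l = phi j l.
Proof.
move=> hab [lin bij mul unit]; set l := a - 1.
have above j : window a b j -> l < j by move=> /andP[]; lia.
have [||||||||psi [iso agree]] := extend_row lin bij mul unit (i := l) (i4 := l + 4)
  _ _ _ _ _ _ (HconA.2 l) (HconB.2 l)
  (res_tail_bases HconA HresA HgorA l) (@res_presents _ _ _ HresA l (window a b) _)
  (res_tail_bases HconB HresB HgorB l) (@res_presents _ _ _ HresB l (window a b) _).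
- by apply/negP => /above; lia.
- by apply/andP; lia.
- by apply/andP; lia.
- by apply/andP; lia.
- by move=> j /above; exact: HconA.1.
- by move=> j /above; exact: HconB.1.
- by move=> j /above; lia.
- by move=> j /above; lia.
exists psi; split=> //; apply: iso_on_ext iso => j; rewrite /window.
by have [->|] := eqVneq j l; rewrite ?orbT ?orbF; lia.
Qed.

Lemma iso_on_unop P phi : iso_on (zop A) (zop B) P phi -> iso_on A B P (fun i j => phi j i).
Proof. exact: iso_on_op. Qed.

(* The right extension is the left one in the opposite algebras, where the
   resolution of S_{b-3} read backwards presents the new column. *)
Lemma extend_right a b phi : a + 3 <= b -> iso_on A B (window a b) phi ->
  exists psi, iso_on A B (window a (b + 1)) psi /\
              forall j l, window a b j -> window a b l -> psi j l = phi j l.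
Proof.
move=> hab /iso_on_op [lin bij mul unit]; set l := b - 3.
have below j : window a b j -> j < l + 4 by move=> /andP[]; lia.
have [||||||||psi [iso agree]] := extend_row lin bij mul unit (i := l + 4) (i4 := l)
  _ _ _ _ _ _ (HconA.2 (l + 4)) (HconB.2 (l + 4))
  (res_op_tail_bases HconA HresA l) (@res_op_presents _ _ _ HconA HresA HgorA l (window a b) _)
  (res_op_tail_bases HconB HresB l) (@res_op_presents _ _ _ HconB HresB HgorB l (window a b) _).
- by apply/negP => /below; lia.
- by apply/andP; lia.
- by apply/andP; lia.
- by apply/andP; lia.
- by move=> j /below; exact: HconA.1.
- by move=> j /below; exact: HconB.1.
- by move=> j /below; lia.
- by move=> j /below; lia.
exists (fun i j => psi j i); split; last by move=> j m Wj Wm; rewrite agree.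
apply: iso_on_unop; apply: iso_on_ext iso => j; rewrite /window.
by have [->|] := eqVneq j (l + 4); rewrite ?orbT ?orbF; lia.
Qed.

Definition window_n (n : nat) : int -> bool := window (- (n%:Z)) (3 + n%:Z).

Lemma extend_window n phi : iso_on A B (window_n n) phi ->
  exists psi, iso_on A B (window_n n.+1) psi /\
              forall j l, window_n n j -> window_n n l -> psi j l = phi j l.
Proof.
move=> iso0.
have [|psi1 [iso1 agree1]] := @extend_left (- (n%:Z)) (3 + n%:Z) phi _ iso0; first by lia.
have [|psi2 [iso2 agree2]] := @extend_right (- (n%:Z) - 1) (3 + n%:Z) psi1 _ iso1; first by lia.
exists psi2; split.
  by apply: iso_on_ext iso2 => j; rewrite /window_n /window; lia.
move=> j l /andP [h1 h2] /andP [h3 h4].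
by rewrite agree2 ?agree1 //; apply/andP; lia.
Qed.

Lemma iso_of_window_iso phi0 : iso_on A B (window_n 0) phi0 ->
  exists psi, iso_on A B (fun _ => true) psi.
Proof.
move=> iso0.
pose FT := forall i j, A i j -> B i j.
pose Step n (phi psi : FT) := iso_on A B (window_n n) phi ->
  iso_on A B (window_n n.+1) psi /\
  forall j l, window_n n j -> window_n n l -> psi j l = phi j l.
have step n (phi : FT) : exists psi, Step n phi psi.
  have [iso|niso] := Classical_Prop.classic (iso_on A B (window_n n) phi).
    by have [psi Hpsi] := extend_window iso; exists psi.
  by exists phi.
pose next n phi := epsilon (inhabits phi) (Step n phi).
have nextP n phi : Step n phi (next n phi) := epsilon_spec _ _ (step n phi).
pose fix iso n : FT := if n is m.+1 then next m (iso m) else phi0.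
have isoP n : iso_on A B (window_n n) (iso n).
  by elim: n => [|n IH] //=; exact: (nextP n _ IH).1.
apply: (@glue_iso _ _ _ window_n (fun i => absz i) _ _ iso isoP).
- by move=> n m i nm /andP[h1 h2]; apply/andP; lia.
- by move=> i n h; apply/andP; lia.
- by move=> n i j Wi Wj; exact: (nextP n _ (isoP n)).2.
Qed.

End WindowExtension.

Theorem corollary5p2p3 (k : fieldType) (A A' : zalg k) :
  cubic_regular A -> cubic_regular A' -> trunc03_iso A A' -> zalg_iso A A'.
Proof.
move=> [HconA _ [resA [HresA HgorA]]] [HconB _ [resB [HresB HgorB]]] [phi0 iso03].
have iso0 : iso_on A A' (window_n 0) phi0.
  by apply: iso_on_ext iso03 => j; rewrite /window_n /window; lia.
exact: (iso_of_window_iso HconA HresA HgorA HconB HresB HgorB iso0).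
Qed.
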